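(* Let $(\bar x,\bar y)$ be a local minimax point of $\min_{x\in X}\max_{y\in Y}f(x,y)$. Suppose $f$ is twice semidifferentiable at $(\bar x,\bar y)$, the separation property holds for the subderivative of $f$ at $(\bar x,\bar y)$, and for every $h\in T_Y(\bar y)\setminus\{0\}$ with $\mathrm{d}_yf(\bar x,\bar y)(h)=0$ we have $$\mathrm{d}^2_{yy}f(\bar x,\bar y)(h)-\mathrm{d}^2\delta_X(\bar x;\mathrm{d}_xf(\bar x,\bar y))(0)-\mathrm{d}^2\delta_Y(\bar y;\mathrm{d}_yf(\bar x,\bar y))(h)<0,$$ where at least one of $\mathrm{d}^2\delta_X(\bar x;\mathrm{d}_xf(\bar x,\bar y))(0)$ and $\mathrm{d}^2\delta_Y(\bar y;\mathrm{d}_yf(\bar x,\bar y))(h)$ is finite. Then $(\bar x,\bar y)$ is a calm local minimax point.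
   Context: $X\subseteq\mathbb{R}^n$, $Y\subseteq\mathbb{R}^m$ nonempty closed, $f:\mathbb{R}^n\times\mathbb{R}^m\to\mathbb{R}$; $\mathbb{B}_\epsilon(z)$ closed Euclidean ball. Standing assumption: for every $x\in X$, $\bar y\in Y$, $\epsilon\ge0$ the maximum of $f(x,\cdot)$ over $Y\cap\mathbb{B}_\epsilon(\bar y)$ is attained. A radius function is $\tau:[0,\infty)\to[0,\infty)$ with $\tau(0)=0$, $\tau(\delta)\to0$ as $\delta\downarrow0$; calm at $0$ if $\tau(\delta)\le\kappa\delta$ for all $\delta\in[0,\delta_1]$ for some $\kappa,\delta_1>0$. $(\bar x,\bar y)\in X\times Y$ is a local minimax point if there exist $\delta_0>0$ and a radius function $\tau$ with $f(\bar x,y)\le f(\bar x,\bar y)\le\max_{y'\in Y\cap\mathbb{B}_{\tau(\delta)}(\bar y)}f(x,y')$ for all $\delta\in(0,\delta_0]$, $x\in X\cap\mathbb{B}_\delta(\bar x)$, $y\in Y\cap\mathbb{B}_\delta(\bar y)$; calm local minimax if moreover $\tau$ can be taken calm at $0$. Variational notation: for $\psi:\mathbb{R}^r\to\mathbb{R}$, $\mathrm{d}\psi(\bar z)(w):=\liminf_{t\downarrow0,w'\to w}\frac{\psi(\bar z+tw')-\psi(\bar z)}{t}$; semidifferentiable at $\bar z$ if for each $w$ this is a limit (real-valued); $\mathrm{d}^2\psi(\bar z)(w):=\liminf_{t\downarrow0,w'\to w}\frac{\psi(\bar z+tw')-\psi(\bar z)-t\,\mathrm{d}\psi(\bar z)(w')}{\frac12t^2}$;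 twice semidifferentiable if semidifferentiable and for each $w$ this liminf is a limit (real-valued). $\mathrm{d}_xf(\bar x,\bar y)(u)$ is the subderivative of $f(\cdot,\bar y)$ at $\bar x$; $\mathrm{d}_yf(\bar x,\bar y)(h)$ and $\mathrm{d}^2_{yy}f(\bar x,\bar y)(h)$ are the subderivative and second subderivative of $f(\bar x,\cdot)$ at $\bar y$; $\mathrm{d}f(\bar x,\bar y)(u,h)$ is the subderivative of $f$. The separation property for the subderivative holds at $(\bar x,\bar y)$ if $\mathrm{d}f(\bar x,\bar y)(u,h)=\mathrm{d}_xf(\bar x,\bar y)(u)+\mathrm{d}_yf(\bar x,\bar y)(h)$ for all $(u,h)$. $T_S(\bar z)$ is the tangent cone. For closed $S$, $\bar z\in S$, $\varphi:\mathbb{R}^r\to\mathbb{R}$: $\mathrm{d}^2\delta_S(\bar z;\varphi)(w):=\liminf_{t\downarrow0,\,w'\to w,\ \bar z+tw'\in S}\frac{-2\varphi(w')}{t}$ ($+\infty$ if no such $t,w'$). *)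

From HB Require Import structures.
From mathcomp Require Import all_boot all_order all_algebra.
From mathcomp Require Import all_classical all_reals all_analysis.
Set Implicit Arguments. Unset Strict Implicit. Unset Printing Implicit Defensive.
Import Order.TTheory GRing.Theory Num.Theory.
Import numFieldNormedType.Exports.
Local Open Scope classical_set_scope.
Local Open Scope ring_scope.

Section Defs.
Variable R : realType.

Definition enorm {r : nat} (v : 'rV[R]_r) : R := Num.sqrt (\sum_i (v 0 i) ^+ 2).

Definition eball {r : nat} (z : 'rV[R]_r) (eps : R) : set 'rV[R]_r :=
  [set v | enorm (v - z) <= eps].

(* liminf_{t \downarrow 0, w' -> w, P t w'} q t w' (inf of empty set = +oo) *)
Definition liminf0 {r : nat} (q : R -> 'rV[R]_r -> \bar R)
  (P : R -> 'rV[R]_r -> Prop) (w : 'rV[R]_r) : \bar R :=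
  ereal_sup [set ereal_inf [set q p.1 p.2 | p in
     [set p : R * 'rV[R]_r | 0 < p.1 < d /\ enorm (p.2 - w) < d /\ P p.1 p.2]]
    | d in [set d : R | 0 < d]].

Definition haslim0 {r : nat} (q : R -> 'rV[R]_r -> \bar R) (w : 'rV[R]_r) (L : R)
  : Prop :=
  forall eps : R, 0 < eps -> exists d : R, 0 < d /\
    forall (t : R) (w' : 'rV[R]_r), 0 < t < d -> enorm (w' - w) < d ->
      (`| q t w' - L%:E | < eps%:E)%E.

Definition dq1 {r : nat} (psi : 'rV[R]_r -> R) (z : 'rV[R]_r) :
  R -> 'rV[R]_r -> \bar R :=
  fun t w' => ((psi (z + t *: w') - psi z) / t)%:E.

Definition subderiv {r : nat} (psi : 'rV[R]_r -> R) (z w : 'rV[R]_r) : \bar R :=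
  liminf0 (dq1 psi z) (fun _ _ => True) w.

Definition semidiff {r : nat} (psi : 'rV[R]_r -> R) (z : 'rV[R]_r) : Prop :=
  forall w, exists L : R, haslim0 (dq1 psi z) w L.

Definition dq2 {r : nat} (psi : 'rV[R]_r -> R) (z : 'rV[R]_r) :
  R -> 'rV[R]_r -> \bar R :=
  fun t w' => (((psi (z + t *: w') - psi z)%:E - t%:E * subderiv psi z w')
                 * (2 / t ^+ 2)%:E)%E.

Definition subderiv2 {r : nat} (psi : 'rV[R]_r -> R) (z w : 'rV[R]_r) : \bar R :=
  liminf0 (dq2 psi z) (fun _ _ => True) w.

Definition twice_semidiff {r : nat} (psi : 'rV[R]_r -> R) (z : 'rV[R]_r) : Prop :=
  semidiff psi z /\ forall w, exists L : R, haslim0 (dq2 psi z) w L.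

Definition d2delta {r : nat} (S : set 'rV[R]_r) (z : 'rV[R]_r)
  (phi : 'rV[R]_r -> \bar R) (w : 'rV[R]_r) : \bar R :=
  liminf0 (fun t w' => ((-2)%:E * phi w' * (t^-1)%:E)%E)
          (fun t w' => S (z + t *: w')) w.

Definition tangent_cone {r : nat} (S : set 'rV[R]_r) (z : 'rV[R]_r) : set 'rV[R]_r :=
  [set w | exists (t : nat -> R) (ws : nat -> 'rV[R]_r),
     (forall k, 0 < t k) /\ (forall k, S (z + t k *: ws k)) /\
     (forall eps : R, 0 < eps -> exists N : nat, forall k : nat, (N <= k)%N ->
         t k < eps /\ enorm (ws k - w) < eps)].

Section Minimax.
Variables (n m : nat) (X : set 'rV[R]_n) (Y : set 'rV[R]_m)
          (f : 'rV[R]_n -> 'rV[R]_m -> R).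

Definition fjoint (z : 'rV[R]_(n + m)) : R := f (lsubmx z) (rsubmx z).

Definition d_x (xb : 'rV[R]_n) (yb : 'rV[R]_m) (u : 'rV[R]_n) : \bar R :=
  subderiv (fun x => f x yb) xb u.
Definition d_y (xb : 'rV[R]_n) (yb : 'rV[R]_m) (h : 'rV[R]_m) : \bar R :=
  subderiv (fun y => f xb y) yb h.
Definition d2_yy (xb : 'rV[R]_n) (yb : 'rV[R]_m) (h : 'rV[R]_m) : \bar R :=
  subderiv2 (fun y => f xb y) yb h.
Definition d_joint (xb : 'rV[R]_n) (yb : 'rV[R]_m) (u : 'rV[R]_n) (h : 'rV[R]_m)
  : \bar R := subderiv fjoint (row_mx xb yb) (row_mx u h).

Definition separation_property (xb : 'rV[R]_n) (yb : 'rV[R]_m) : Prop :=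
  forall u h, d_joint xb yb u h = (d_x xb yb u + d_y xb yb h)%E.

(* standing assumption: max of f(x,.) over Y \cap B_eps(yb) is attained *)
Definition max_attained : Prop :=
  forall x yb (eps : R), X x -> Y yb -> 0 <= eps ->
    exists2 ys, (Y `&` eball yb eps) ys &
      forall y, (Y `&` eball yb eps) y -> f x y <= f x ys.

Definition maxY (x : 'rV[R]_n) (yb : 'rV[R]_m) (eps : R) : \bar R :=
  ereal_sup [set (f x y')%:E | y' in Y `&` eball yb eps].

Definition radius_function (tau : R -> R) : Prop :=
  (forall d, 0 <= d -> 0 <= tau d) /\ tau 0 = 0 /\
  (forall eps : R, 0 < eps -> exists d1 : R, 0 < d1 /\
      forall d, 0 < d < d1 -> tau d < eps).

Definition calm_at0 (tau : R -> R) : Prop :=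
  exists kappa d1 : R, 0 < kappa /\ 0 < d1 /\
    forall d, 0 <= d <= d1 -> tau d <= kappa * d.

Definition minimax_with (tau : R -> R) (xb : 'rV[R]_n) (yb : 'rV[R]_m) : Prop :=
  exists d0 : R, 0 < d0 /\
    forall (d : R) x y, 0 < d <= d0 ->
      (X `&` eball xb d) x -> (Y `&` eball yb d) y ->
      f xb y <= f xb yb /\ ((f xb yb)%:E <= maxY x yb (tau d))%E.

Definition local_minimax (xb : 'rV[R]_n) (yb : 'rV[R]_m) : Prop :=
  X xb /\ Y yb /\ exists tau, radius_function tau /\ minimax_with tau xb yb.

Definition calm_local_minimax (xb : 'rV[R]_n) (yb : 'rV[R]_m) : Prop :=
  X xb /\ Y yb /\
  exists tau, radius_function tau /\ calm_at0 tau /\ minimax_with tau xb yb.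

End Minimax.
End Defs.

From HB Require Import structures.
From mathcomp Require Import all_boot all_order all_algebra.
From mathcomp Require Import all_classical all_reals all_analysis.
From mathcomp Require Import ring lra.
Set Implicit Arguments. Unset Strict Implicit. Unset Printing Implicit Defensive.
Import Order.TTheory GRing.Theory Num.Theory.
Import numFieldNormedType.Exports.
Local Open Scope classical_set_scope.
Local Open Scope ring_scope.

(* Suppose no calm radius works.  Then for every k there are x close to xb
   and a maximiser y of f(x, .) near yb with |y - yb| > k |x - xb| and
   f(x, y) >= f(xb, yb).  Normalising by s = |y - yb| gives steps (u, h)
   with u -> 0 and |h| = 1, and a cluster point p of the h's.  Then p is a
   nonzero tangent direction of Y at yb with d_y f(xb, yb)(p) = 0, and along
   the steps the second-order difference quotient of f splits, thanks to the
   separation property, into a nonnegative term plus the two quotients whose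
   liminfs define d^2 delta_X(xb; d_x f)(0) and d^2 delta_Y(yb; d_y f)(p).
   Hence d^2_yy f(xb, yb)(p) is at least their sum, contradicting the
   second-order hypothesis; so some linear radius d |-> K d works. *)

Section RowVectors.
Variable R : realType.

Lemma enorm_ge0 r (v : 'rV[R]_r) : 0 <= enorm v.
Proof. exact: sqrtr_ge0. Qed.

Lemma enorm0 r : enorm (0 : 'rV[R]_r) = 0.
Proof. by rewrite /enorm big1 ?sqrtr0 // => i _; rewrite mxE expr0n. Qed.

Lemma enormZ r (c : R) (v : 'rV[R]_r) : enorm (c *: v) = `|c| * enorm v.
Proof.
rewrite /enorm (eq_bigr (fun i => c ^+ 2 * (v 0 i) ^+ 2)); last first.
  by move=> i _; rewrite mxE exprMn.
by rewrite -mulr_sumr sqrtrM ?sqr_ge0 // sqrtr_sqr.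
Qed.

Lemma coord_le_enorm r (v : 'rV[R]_r) i : `|v 0 i| <= enorm v.
Proof.
rewrite /enorm -(sqrtr_sqr (v 0 i)) ler_sqrt; last first.
  by rewrite sumr_ge0 // => j _; rewrite sqr_ge0.
by rewrite (bigD1 i) //= lerDl sumr_ge0 // => j _; rewrite sqr_ge0.
Qed.

Lemma mx_norm_le_enorm r (v : 'rV[R]_r) : `|v| <= enorm v.
Proof.
rewrite [`|v|]mx_normrE; apply: bigmax_le; first exact: enorm_ge0.
by move=> [i j] _ /=; rewrite ord1; exact: coord_le_enorm.
Qed.

Lemma enorm_le_mx_norm r (v : 'rV[R]_r) : enorm v <= r.+1%:R * `|v|.
Proof.
have coord_le i : `|v 0 i| <= `|v|.
  by rewrite [`|v|]mx_normrE; exact: (le_bigmax _ (fun ij => `|v ij.1 ij.2|) (ord0, i)).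
rewrite /enorm -(@ger0_norm _ (r.+1%:R * `|v|)) ?mulr_ge0 //.
rewrite -sqrtr_sqr ler_sqrt ?sqr_ge0 //.
apply: (@le_trans _ _ (\sum_(i < r) `|v| ^+ 2)).
  by apply: ler_sum => i _; rewrite -real_normK ?num_real // lerXn2r ?nnegrE.
rewrite sumr_const card_ord exprMn [leRHS]mulrC -(mulr_natr (`|v| ^+ 2) r).
apply: ler_wpM2l; first exact: sqr_ge0.
rewrite -natrX ler_nat; case: r {coord_le v} => // r; rewrite expnS mulnC.
by rewrite (leq_trans (leqnSn _)) // leq_pmulr.
Qed.

Lemma enorm_row_mx n m (a : 'rV[R]_n) (b : 'rV[R]_m) :
  enorm (row_mx a b) = Num.sqrt (enorm a ^+ 2 + enorm b ^+ 2).
Proof.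
rewrite /enorm !sqr_sqrtr ?sumr_ge0 // => [|i _|i _]; try by rewrite sqr_ge0.
by rewrite big_split_ord /=; congr (Num.sqrt (_ + _)); apply: eq_bigr => i _;
  rewrite ?row_mxEl ?row_mxEr.
Qed.

Lemma enorm_row_mx0l n m (b : 'rV[R]_m) :
  enorm (row_mx (0 : 'rV[R]_n) b) = enorm b.
Proof.
by rewrite enorm_row_mx enorm0 expr0n add0r sqrtr_sqr ger0_norm // enorm_ge0.
Qed.

Lemma enorm_row_mx0r n m (a : 'rV[R]_n) :
  enorm (row_mx a (0 : 'rV[R]_m)) = enorm a.
Proof.
by rewrite enorm_row_mx enorm0 expr0n addr0 sqrtr_sqr ger0_norm // enorm_ge0.
Qed.

Lemma enorm_row_mx_le n m (a : 'rV[R]_n) (b : 'rV[R]_m) :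
  enorm (row_mx a b) <= enorm a + enorm b.
Proof.
rewrite enorm_row_mx -(@ger0_norm _ (enorm a + enorm b)) ?addr_ge0 ?enorm_ge0 //.
rewrite -sqrtr_sqr ler_sqrt ?sqr_ge0 // sqrrD lerD2r lerDl.
by rewrite mulrn_wge0 // mulr_ge0 // enorm_ge0.
Qed.

Lemma sub_row_mx n m (a a' : 'rV[R]_n) (b b' : 'rV[R]_m) :
  row_mx a b - row_mx a' b' = row_mx (a - a') (b - b').
Proof. by rewrite opp_row_mx add_row_mx. Qed.

Lemma eball_center r (z : 'rV[R]_r) d : 0 <= d -> eball z d z.
Proof. by rewrite /eball /= subrr enorm0. Qed.

Lemma enorm_shift r (z v : 'rV[R]_r) (s : R) : 0 <= s -> enorm (z + s *: v - z) = s * enorm v.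
Proof. by move=> s_ge0; rewrite addrC addKr enormZ ger0_norm. Qed.

Lemma shift_scaleVK r (z x : 'rV[R]_r) (s : R) : s != 0 -> z + s *: (s^-1 *: (x - z)) = x.
Proof. by move=> s_neq0; rewrite scalerA divff // scale1r addrC subrK. Qed.

Lemma enorm_bounded_cluster r (h : nat -> 'rV[R]_r) :
  (forall k, enorm (h k) <= 1) ->
  exists p, forall e, 0 < e -> forall N, exists k, (N <= k)%N /\ enorm (h k - p) < e.
Proof.
move=> h_le1.
pose A := closed_ball (0 : 'rV[R]_r) 1.
have A_E v : A v = (`|v| <= 1).
  by rewrite /A closed_ballE // /closed_ball_ /= sub0r normrN.
have A_compact : compact A.
  apply: bounded_closed_compact; last exact: closed_ball_closed.
  exists 1; split; first by rewrite num_real.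
  by move=> M M1 v; rewrite A_E => /le_trans; apply; apply: ltW.
have [|p [_ p_cluster]] := A_compact (h @ \oo) _.
  exists 0%N => // k _ /=; rewrite A_E.
  by apply: le_trans (h_le1 k); exact: mx_norm_le_enorm.
exists p => e e0 N.
have e'0 : 0 < e / r.+1%:R by rewrite divr_gt0.
have [_ [[k /= Nk <-] hk]] := p_cluster [set v | exists2 k, (N <= k)%N & h k = v]
  (ball p (e / r.+1%:R)) ltac:(by exists N => // k /= Nk; exists k)
  (nbhsx_ballx _ _ e'0).
exists k; split => //.
move: hk; rewrite -ball_normE /ball_ /= -normrN opprB => hk.
apply: le_lt_trans (enorm_le_mx_norm _) _.
by rewrite mulrC -ltr_pdivlMr.
Qed.

Lemma small_family_cluster (T : Type) r (Q : T -> Prop) (size : T -> R)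
    (g : T -> 'rV[R]_r) :
  (forall e, 0 < e -> exists2 t, Q t & size t < e) ->
  (forall t, Q t -> enorm (g t) <= 1) ->
  exists p, forall e, 0 < e ->
    exists t, [/\ Q t, size t < e & enorm (g t - p) < e].
Proof.
move=> Q_small g_le1.
have /choice [tk Htk] : forall k : nat, exists t, Q t /\ size t < k.+1%:R^-1.
  move=> k; have [|t Qt st] := Q_small k.+1%:R^-1; first by rewrite invr_gt0 ltr0n.
  by exists t.
have [p Hp] := enorm_bounded_cluster (fun k => g_le1 _ (Htk k).1).
exists p => e e0.
have [N _ HN] := near_infty_natSinv_lt (PosNum e0).
have [k [Nk hk]] := Hp e e0 N.
by exists (tk k); split => //; [exact: (Htk k).1 | exact: lt_trans (Htk k).2 (HN _ Nk)].
Qed.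

Lemma tangent_cone_approx r (S : set 'rV[R]_r) z p :
  (forall e, 0 < e -> exists s h, [/\ 0 < s < e, S (z + s *: h) & enorm (h - p) < e]) ->
  tangent_cone S z p.
Proof.
move=> S_approx.
have /choice [sh Hsh] : forall k : nat, exists sh : R * 'rV[R]_r,
    [/\ 0 < sh.1 < k.+1%:R^-1, S (z + sh.1 *: sh.2) & enorm (sh.2 - p) < k.+1%:R^-1].
  move=> k; have [|s [h Hsh]] := S_approx k.+1%:R^-1; first by rewrite invr_gt0 ltr0n.
  by exists (s, h).
exists (fun k => (sh k).1), (fun k => (sh k).2); split; [|split].
- by move=> k; have [/andP[]] := Hsh k.
- by move=> k; have [] := Hsh k.
- move=> e e0; have [N _ HN] := near_infty_natSinv_lt (PosNum e0).
  exists N => k Nk; have [/andP[_ sk] _ hk] := Hsh k.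
  by split; exact: lt_trans (HN k Nk).
Qed.

End RowVectors.

Section Liminf0.
Variable R : realType.

Lemma ereal_dist_lt_fin (x : \bar R) (L e : R) :
  (`|x - L%:E| < e%:E)%E -> exists2 v, x = v%:E & `|v - L| < e.
Proof. by case: x => [v||] //= H; exists v. Qed.

Lemma haslim0_ge r (q : R -> 'rV[R]_r -> \bar R) w L (c : R) :
  haslim0 q w L ->
  (forall e, 0 < e -> exists t w',
     [/\ 0 < t < e, enorm (w' - w) < e & (c%:E <= q t w')%E]) ->
  c <= L.
Proof.
move=> qL q_ge; apply/ler_addgt0Pr => e e0.
have [d [d0 Hd]] := qL e e0.
have [t [w' [tt tw cq]]] := q_ge d d0.
have [v qv] := ereal_dist_lt_fin (Hd t w' tt tw).
by rewrite ltr_norml => /andP[_]; move: cq; rewrite qv lee_fin; lra.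
Qed.

Lemma haslim0_le r (q : R -> 'rV[R]_r -> \bar R) w L (c : R) :
  haslim0 q w L ->
  (forall e, 0 < e -> exists t w',
     [/\ 0 < t < e, enorm (w' - w) < e & (q t w' <= c%:E)%E]) ->
  L <= c.
Proof.
move=> qL q_le; apply/ler_addgt0Pr => e e0.
have [d [d0 Hd]] := qL e e0.
have [t [w' [tt tw qc]]] := q_le d d0.
have [v qv] := ereal_dist_lt_fin (Hd t w' tt tw).
by rewrite ltr_norml => /andP[+ _]; move: qc; rewrite qv lee_fin; lra.
Qed.

Lemma liminf0_haslim0 r (q : R -> 'rV[R]_r -> \bar R) w L :
  haslim0 q w L -> liminf0 q (fun _ _ => True) w = L%:E.
Proof.
move=> qL; apply/eqP; rewrite eq_le; apply/andP; split.
- apply: ge_ereal_sup => _ [d d0 <-]; apply/lee_addgt0Pr => e e0.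
  have [d' [d'0 Hd']] := qL e e0.
  pose t := Num.min d d' / 2.
  have t0 : 0 < t by rewrite divr_gt0 // lt_min d0 d'0.
  have : t < Num.min d d'.
    by rewrite /t ltr_pdivrMr // ltr_pMr ?ltr1n // lt_min d0 d'0.
  rewrite lt_min => /andP[td td'].
  have ww : enorm (w - w) = 0 by rewrite subrr enorm0.
  have tt : 0 < t < d' by rewrite t0 td'.
  have [v qv v_near] := ereal_dist_lt_fin (Hd' t w tt ltac:(by rewrite ww)).
  apply: ge_ereal_inf; exists (q t w).
    by exists (t, w) => //=; split; [rewrite t0 td | rewrite ww].
  by rewrite qv -EFinD lee_fin; move: v_near; rewrite ltr_norml ltrBlDl => /andP[_ /ltW].
- apply/lee_subgt0Pr => e e0.
  have [d [d0 Hd]] := qL e e0.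
  apply: le_ereal_sup_tmp; exists (ereal_inf [set q p.1 p.2 | p in
     [set p : R * 'rV[R]_r | 0 < p.1 < d /\ enorm (p.2 - w) < d /\ True]]).
    by exists d.
  apply: le_ereal_inf_tmp => _ [[t w'] /= [tt [tw _]] <-].
  have [v qv v_near] := ereal_dist_lt_fin (Hd t w' tt tw).
  by rewrite qv -EFinB lee_fin; move: v_near; rewrite ltr_norml => /andP[+ _]; lra.
Qed.

Lemma liminf0_gt_near r (q : R -> 'rV[R]_r -> \bar R) P w (c : R) :
  (c%:E < liminf0 q P w)%E -> exists d, 0 < d /\ forall t w', 0 < t < d ->
    enorm (w' - w) < d -> P t w' -> (c%:E < q t w')%E.
Proof.
move=> /ereal_sup_gt [_ [d d0 <-]] c_lt; exists d; split => // t w' tt tw Pt.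
by apply: (lt_le_trans c_lt); apply: ereal_inf_lbound; exists (t, w').
Qed.

Lemma ereal_split_lt_sum (A B : \bar R) (L : R) :
  (A \is a fin_num \/ B \is a fin_num) -> (L%:E - A - B < 0)%E ->
  exists c c' : R, [/\ (c%:E < A)%E, (c'%:E < B)%E & L < c + c'].
Proof.
case: A => [a||]; case: B => [b||] //= AB_fin; try by case: AB_fin.
- rewrite -!EFinD lte_fin => lt0; exists (a - (a + b - L) / 3), (b - (a + b - L) / 3).
  by rewrite !lte_fin; split; lra.
- by exists (a - 1), (L - a + 2); rewrite lte_fin ltry; split => //; lra.
- by exists (L - b + 2), (b - 1); rewrite lte_fin ltry; split => //; lra.
Qed.

End Liminf0.

Section PartialSubderivatives.
Variables (R : realType) (n m : nat) (f : 'rV[R]_n -> 'rV[R]_m -> R).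
Variables (xb : 'rV[R]_n) (yb : 'rV[R]_m).

Lemma fjoint_row_mx a b : fjoint f (row_mx a b) = f a b.
Proof. by rewrite /fjoint row_mxKl row_mxKr. Qed.

Lemma row_mx_shift (t : R) u h :
  row_mx xb yb + t *: row_mx u h = row_mx (xb + t *: u) (yb + t *: h).
Proof. by rewrite scale_row_mx add_row_mx. Qed.

Lemma dq1_partial_x t u :
  dq1 (fun x => f x yb) xb t u = dq1 (fjoint f) (row_mx xb yb) t (row_mx u 0).
Proof. by rewrite /dq1 row_mx_shift scaler0 addr0 !fjoint_row_mx. Qed.

Lemma dq1_partial_y t h :
  dq1 (fun y => f xb y) yb t h = dq1 (fjoint f) (row_mx xb yb) t (row_mx 0 h).
Proof. by rewrite /dq1 row_mx_shift scaler0 addr0 !fjoint_row_mx. Qed.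

Lemma d_x_of_joint u L :
  haslim0 (dq1 (fjoint f) (row_mx xb yb)) (row_mx u 0) L -> d_x f xb yb u = L%:E.
Proof.
move=> HL; apply: liminf0_haslim0 => e e0.
have [d [d0 Hd]] := HL e e0; exists d; split => // t w' tt tw.
by rewrite dq1_partial_x; apply: Hd => //; rewrite sub_row_mx subrr enorm_row_mx0r.
Qed.

Lemma d_y_of_joint h L :
  haslim0 (dq1 (fjoint f) (row_mx xb yb)) (row_mx 0 h) L -> d_y f xb yb h = L%:E.
Proof.
move=> HL; apply: liminf0_haslim0 => e e0.
have [d [d0 Hd]] := HL e e0; exists d; split => // t w' tt tw.
by rewrite dq1_partial_y; apply: Hd => //; rewrite sub_row_mx subrr enorm_row_mx0l.
Qed.

Hypothesis f_semidiff : semidiff (fjoint f) (row_mx xb yb).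

Lemma d_x_fin u : exists L : R, d_x f xb yb u = L%:E.
Proof. by have [L HL] := f_semidiff (row_mx u 0); exists L; exact: d_x_of_joint. Qed.

Lemma d_y_fin h : exists L : R,
  d_y f xb yb h = L%:E /\ subderiv (fjoint f) (row_mx xb yb) (row_mx 0 h) = L%:E.
Proof.
have [L HL] := f_semidiff (row_mx 0 h); exists L.
by split; [exact: d_y_of_joint | exact: liminf0_haslim0].
Qed.

Lemma d2_yy_of_joint h L :
  haslim0 (dq2 (fjoint f) (row_mx xb yb)) (row_mx 0 h) L -> d2_yy f xb yb h = L%:E.
Proof.
move=> HL; apply: liminf0_haslim0 => e e0.
have [d [d0 Hd]] := HL e e0; exists d; split => // t w' tt tw.
have -> : dq2 (fun y => f xb y) yb t w' = dq2 (fjoint f) (row_mx xb yb) t (row_mx 0 w').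
  have [L' [dyL' djL']] := d_y_fin w'.
  by move: dyL'; rewrite /dq2 /d_y row_mx_shift scaler0 addr0 !fjoint_row_mx djL' => ->.
by apply: Hd => //; rewrite sub_row_mx subrr enorm_row_mx0l.
Qed.

End PartialSubderivatives.

Lemma linear_radius_function (R : realType) (K : R) :
  0 < K -> radius_function (fun d => K * d).
Proof.
move=> K_gt0; split; first by move=> d d_ge0; exact: mulr_ge0 (ltW K_gt0) d_ge0.
split; first by rewrite mulr0.
move=> e e_gt0; exists (e / K); split; first by rewrite divr_gt0.
by move=> d /andP[_ d_lt]; rewrite mulrC -ltr_pdivlMr.
Qed.

Lemma linear_calm_at0 (R : realType) (K : R) : 0 < K -> calm_at0 (fun d => K * d).
Proof. by move=> K_gt0; exists K, 1; split => //; split => // d _. Qed.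

Section CalmMinimax.
Variables (R : realType) (n m : nat) (X : set 'rV[R]_n) (Y : set 'rV[R]_m).
Variables (f : 'rV[R]_n -> 'rV[R]_m -> R) (xb : 'rV[R]_n) (yb : 'rV[R]_m).

Definition calm_bound (K D : R) : Prop :=
  forall d x, 0 < d <= D -> (X `&` eball xb d) x ->
    ((f xb yb)%:E <= maxY Y f x yb (K * d))%E.

Definition nondescent_step (s : R) (u : 'rV[R]_n) (h : 'rV[R]_m) : Prop :=
  [/\ 0 < s, X (xb + s *: u), Y (yb + s *: h),
      f xb yb <= f (xb + s *: u) (yb + s *: h) & enorm h = 1].

Definition strict_second_order_condition : Prop :=
  forall h : 'rV[R]_m, tangent_cone Y yb h -> h != 0 -> d_y f xb yb h = 0%E ->
    (d2delta X xb (d_x f xb yb) 0 \is a fin_num \/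
     d2delta Y yb (d_y f xb yb) h \is a fin_num) /\
    (d2_yy f xb yb h - d2delta X xb (d_x f xb yb) 0
       - d2delta Y yb (d_y f xb yb) h < 0)%E.

Variables (tau : R -> R) (d0 : R).
Hypotheses (Xxb : X xb) (Yyb : Y yb) (f_max : max_attained X Y f).
Hypotheses (tau_radius : radius_function tau) (d0_gt0 : 0 < d0).
Hypothesis minimax_tau : forall d x y, 0 < d <= d0 ->
  (X `&` eball xb d) x -> (Y `&` eball yb d) y ->
  f xb y <= f xb yb /\ ((f xb yb)%:E <= maxY Y f x yb (tau d))%E.

Lemma calm_bound_failure (K D : R) : D <= d0 -> ~ calm_bound K D ->
  exists d x y, [/\ 0 < d <= D, (X `&` eball xb d) x, (Y `&` eball yb (tau d)) y,
     f xb yb <= f x y & K * d < enorm (y - yb)].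
Proof.
move=> Dd0 /existsNP [d /existsNP [x /not_implyP [dD /not_implyP [Bx /negP]]]].
rewrite -ltNge => max_lt.
have [d_gt0 dd0] : 0 < d /\ d <= d0.
  by case/andP: dD => d_gt0 /le_trans /(_ Dd0).
have [_ fb_le_max] := minimax_tau (d := d) (x := x) (y := yb)
  ltac:(by rewrite d_gt0) Bx (conj Yyb (eball_center yb (ltW d_gt0))).
have [tau_ge0 _] := tau_radius.
have [y [Yy yB] y_max] := f_max Bx.1 Yyb (tau_ge0 d (ltW d_gt0)).
have fb_le : f xb yb <= f x y.
  rewrite -lee_fin; apply: le_trans fb_le_max _.
  by apply: ge_ereal_sup => _ [y' Hy' <-]; rewrite lee_fin; exact: y_max.
exists d, x, y; split => //; rewrite ltNge; apply/negP => y_near.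
move: max_lt; rewrite ltNge => /negP; apply.
apply: (@le_trans _ _ (f x y)%:E); first by rewrite lee_fin.
by apply: ereal_sup_ubound; exists y.
Qed.

Lemma small_nondescent_steps : ~ (exists K D, 0 < K /\ 0 < D /\ calm_bound K D) ->
  forall e, 0 < e -> exists2 q : R * 'rV[R]_n * 'rV[R]_m,
    nondescent_step q.1.1 q.1.2 q.2 & Num.max q.1.1 (enorm q.1.2) < e.
Proof.
move=> not_calm e e_gt0.
have [_ [_ tau_small]] := tau_radius.
have [d1 [d1_gt0 tau_lt]] := tau_small e e_gt0.
have eps_gt0 : 0 < Num.min e (d1 / d0) by rewrite lt_min e_gt0 divr_gt0.
have [N _ /(_ N (leqnn N))] := near_infty_natSinv_lt (PosNum eps_gt0).
rewrite lt_min => /andP[Ne Nd1] /=.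
have k_gt0 : 0 < N.+1%:R :> R by rewrite ltr0n.
have [d [x [y [/andP[d_gt0 dD] [Xx xB] [Yy y_tau] fb_le far]]]] :=
  calm_bound_failure (K := N.+1%:R) (D := d0 / N.+1%:R)
    ltac:(by rewrite ler_pdivrMr // ler_pMr // ler1n)
    (fun calm => not_calm (ex_intro _ _ (ex_intro _ _ (conj k_gt0
       (conj (divr_gt0 d0_gt0 k_gt0) calm))))).
pose s := enorm (y - yb).
have s_gt0 : 0 < s by apply: lt_trans far; rewrite mulr_gt0.
have s_neq0 : s != 0 by rewrite gt_eqF.
exists (s, s^-1 *: (x - xb), s^-1 *: (y - yb)) => /=.
  split; rewrite ?shift_scaleVK //.
  by rewrite enormZ ger0_norm ?invr_ge0 ?ltW // mulVf.
rewrite gt_max; apply/andP; split.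
- apply: le_lt_trans y_tau (tau_lt _ _); rewrite d_gt0 /=.
  apply: le_lt_trans dD _; rewrite ltr_pdivrMr // mulrC -ltr_pdivrMr //.
  by rewrite -invf_div -[N.+1%:R]invrK ltf_pV2 ?posrE ?invr_gt0 ?divr_gt0.
- have d_lt : d < N.+1%:R^-1 * s by rewrite mulrC ltr_pdivlMr // mulrC.
  rewrite enormZ ger0_norm ?invr_ge0 ?ltW // mulrC ltr_pdivrMr //.
  by apply: le_lt_trans (xB : enorm (x - xb) <= d) (lt_trans d_lt _); rewrite ltr_pM2r.
Qed.

Lemma nondescent_cluster : ~ (exists K D, 0 < K /\ 0 < D /\ calm_bound K D) ->
  exists p, forall e, 0 < e -> exists s u h,
    [/\ nondescent_step s u h, s < e, enorm u < e & enorm (h - p) < e].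
Proof.
move=> not_calm.
have [|p Hp] := small_family_cluster (small_nondescent_steps not_calm) (g := snd).
  by move=> [[s u] h] [_ _ _ _ ->].
exists p => e e_gt0; have [[[s u] h] [step]] := Hp e e_gt0.
by rewrite gt_max => /andP[se ue] hp; exists s, u, h.
Qed.

Section ClusterDirection.
Variable p : 'rV[R]_m.
Hypothesis p_cluster : forall e, 0 < e -> exists s u h,
  [/\ nondescent_step s u h, s < e, enorm u < e & enorm (h - p) < e].

Lemma cluster_neq0 : p != 0.
Proof.
apply/eqP => p0; have [s [u [h [[_ _ _ _ h1] _ _]]]] := p_cluster (e := 2^-1) ltac:(by []).
by rewrite p0 subr0 h1; lra.
Qed.

Lemma cluster_tangent : tangent_cone Y yb p.
Proof.
apply: tangent_cone_approx => e e_gt0.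
have [s [u [h [[s_gt0 _ Yh _ _] se _ hp]]]] := p_cluster e_gt0.
by exists s, h; rewrite s_gt0 se.
Qed.

Lemma cluster_d_y_eq0 : semidiff (fjoint f) (row_mx xb yb) -> d_y f xb yb p = 0%E.
Proof.
move=> /(_ (row_mx 0 p)) [L HL]; rewrite (d_y_of_joint HL).
congr EFin; apply/eqP; rewrite eq_le; apply/andP; split.
- apply: (haslim0_le HL) => e e_gt0.
  have [|s [u [h [[s_gt0 _ Yh _ h1]]]]] := p_cluster (e := Num.min e d0).
    by rewrite lt_min e_gt0 d0_gt0.
  rewrite !lt_min => /andP[se sd0] _ /andP[hp _].
  exists s, (row_mx 0 h); split; first by rewrite s_gt0.
    by rewrite sub_row_mx subrr enorm_row_mx0l.
  rewrite -dq1_partial_y /dq1 lee_fin pmulr_lle0 ?invr_gt0 // subr_le0.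
  have sd0' : 0 < s <= d0 by rewrite s_gt0 ltW.
  have xB : (X `&` eball xb s) xb by split => //; exact: eball_center (ltW s_gt0).
  have yB : (Y `&` eball yb s) (yb + s *: h).
    by split => //; rewrite /eball /= enorm_shift ?h1 ?mulr1 // ltW.
  by have [] := minimax_tau sd0' xB yB.
- apply: (haslim0_ge HL) => e e_gt0.
  have [|s [u [h [[s_gt0 _ _ fb_le _] se ue hp]]]] := p_cluster (e := e / 2).
    by rewrite divr_gt0.
  exists s, (row_mx u h); split; first by rewrite s_gt0; lra.
    rewrite sub_row_mx subr0; apply: le_lt_trans (enorm_row_mx_le _ _) _; lra.
  rewrite /dq1 row_mx_shift !fjoint_row_mx lee_fin.
  by rewrite divr_ge0 ?subr_ge0 // ltW.
Qed.

Lemma cluster_second_order_bound (L c c' : R) :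
  semidiff (fjoint f) (row_mx xb yb) -> separation_property f xb yb ->
  haslim0 (dq2 (fjoint f) (row_mx xb yb)) (row_mx 0 p) L ->
  (c%:E < d2delta X xb (d_x f xb yb) 0)%E ->
  (c'%:E < d2delta Y yb (d_y f xb yb) p)%E ->
  c + c' <= L.
Proof.
move=> f_sd f_sep HL cX cY.
have [dX [dX_gt0 near_X]] := liminf0_gt_near cX.
have [dY [dY_gt0 near_Y]] := liminf0_gt_near cY.
apply: (haslim0_ge HL) => e e_gt0.
have [|s [u [h [[s_gt0 Xu Yh fb_le _]]]]] :=
  p_cluster (e := Num.min (Num.min dX dY) (e / 2)).
  by rewrite !lt_min dX_gt0 dY_gt0 divr_gt0.
rewrite !lt_min => /andP[/andP[sX sY] se] /andP[/andP[uX _] ue] /andP[/andP[_ hY] hp].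
have [Dx dxE] := d_x_fin f_sd u.
have [Dy [dyE _]] := d_y_fin f_sd h.
have quotX : c < -2 * Dx * s^-1.
  have := near_X s u; rewrite s_gt0 sX subr0 dxE -!EFinM lte_fin; exact.
have quotY : c' < -2 * Dy * s^-1.
  have := near_Y s h; rewrite s_gt0 sY dyE -!EFinM lte_fin; exact.
exists s, (row_mx u h); split; first by rewrite s_gt0; lra.
  rewrite sub_row_mx subr0; apply: le_lt_trans (enorm_row_mx_le _ _) _; lra.
have := f_sep u h; rewrite /d_joint dxE dyE => sepE.
rewrite /dq2 row_mx_shift !fjoint_row_mx sepE -EFinD -EFinM lee_fin.
rewrite -subr_ge0 in fb_le; move: fb_le.
move: (f (xb + s *: u) (yb + s *: h) - f xb yb) => F F_ge0.
have -> : (F - s * (Dx + Dy)) * (2 / s ^+ 2) =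
    2 * F / s ^+ 2 + (-2 * Dx * s^-1) + (-2 * Dy * s^-1).
  by field; rewrite gt_eqF.
have : 0 <= 2 * F / s ^+ 2 by rewrite divr_ge0 ?mulr_ge0 ?exprn_ge0 // ltW.
lra.
Qed.

End ClusterDirection.

Lemma calm_bound_exists :
  twice_semidiff (fjoint f) (row_mx xb yb) -> separation_property f xb yb ->
  strict_second_order_condition ->
  exists K D, 0 < K /\ 0 < D /\ calm_bound K D.
Proof.
move=> [f_sd f_sd2] f_sep f_sosc; apply: contrapT => not_calm.
have [p p_cluster] := nondescent_cluster not_calm.
have [AB_fin sosc_lt] := f_sosc p (cluster_tangent p_cluster) (cluster_neq0 p_cluster)
  (cluster_d_y_eq0 p_cluster f_sd).
have [L HL] := f_sd2 (row_mx 0 p).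
rewrite (d2_yy_of_joint f_sd HL) in sosc_lt.
have [c [c' [cX cY L_lt]]] := ereal_split_lt_sum AB_fin sosc_lt.
have := cluster_second_order_bound p_cluster f_sd f_sep HL cX cY.
by rewrite leNgt L_lt.
Qed.

End CalmMinimax.

Theorem mainTheorem8 (R : realType) (n m : nat)
  (X : set 'rV[R]_n) (Y : set 'rV[R]_m) (f : 'rV[R]_n -> 'rV[R]_m -> R)
  (xb : 'rV[R]_n) (yb : 'rV[R]_m) :
  closed X -> closed Y -> X !=set0 -> Y !=set0 ->
  max_attained X Y f ->
  local_minimax X Y f xb yb ->
  twice_semidiff (fjoint f) (row_mx xb yb) ->
  separation_property f xb yb ->
  (forall h : 'rV[R]_m, tangent_cone Y yb h -> h != 0 ->
     d_y f xb yb h = 0%E ->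
     (d2delta X xb (d_x f xb yb) 0 \is a fin_num \/
      d2delta Y yb (d_y f xb yb) h \is a fin_num) /\
     (d2_yy f xb yb h - d2delta X xb (d_x f xb yb) 0
        - d2delta Y yb (d_y f xb yb) h < 0)%E) ->
  calm_local_minimax X Y f xb yb.
Proof.
move=> _ _ _ _ f_max [Xxb [Yyb [tau [tau_radius [d0 [d0_gt0 minimax_tau]]]]]].
move=> f_tsd f_sep f_sosc.
have [K [D [K_gt0 [D_gt0 calmKD]]]] :=
  calm_bound_exists Xxb Yyb f_max tau_radius d0_gt0 minimax_tau f_tsd f_sep f_sosc.
split => //; split => //; exists (fun d => K * d).
split; first exact: linear_radius_function.
split; first exact: linear_calm_at0.
exists (Num.min d0 D); split; first by rewrite lt_min d0_gt0 D_gt0.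
move=> d x y /andP[d_gt0]; rewrite le_min => /andP[dd0 dD] Bx By.
have dd0' : 0 < d <= d0 by rewrite d_gt0.
split; first by have [] := minimax_tau d x y dd0' Bx By.
by apply: calmKD => //; rewrite d_gt0.
Qed.
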